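(* Let $K$ be a triangle and $p\ge1$. The space $\mathcal P_p(K;\mathbb S)$ is unisolvent with respect to the following degrees of freedom for $\sigma\in\mathcal P_p(K;\mathbb S)$: (i) for each vertex $\mathbf x$ of $K$, the 3 values $\sigma(\mathbf x)$ (the entries of the symmetric matrix); (ii) for each edge $\gamma$ of $K$, the $2(p-1)$ values $\int_\gamma(\sigma\mathbf n)\cdot r\,\mathrm ds$ for $r\in\mathcal P_{p-2}(\gamma;\mathbb V)$; (iii) the $\tfrac32p(p-1)$ values $\int_K\sigma:\tau\,\mathrm dx$ for $\tau\in\Sigma^p_0(K;\mathbb S)$. That is, a $\sigma\in\mathcal P_p(K;\mathbb S)$ on which all these functionals vanish is zero.
   Context: $\mathbb V=\mathbb R^2$ and $\mathbb S=\mathbb R^{2\times2}_{\rm sym}$; $\mathbf n$ is the outward unit normal of $K$, and $A:B=\sum_{ij}A_{ij}B_{ij}$. We set $\Sigma^p_0(K;\mathbb S)=\{\tau\in\mathcal P_p(K;\mathbb S):\tau\mathbf n|_{\partial K}=0\}$, and by convention $\mathcal P_{-1}=\{0\}$. *)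

From Stdlib Require Import Reals.
From Coquelicot Require Import Coquelicot.
Open Scope R_scope.

Fixpoint sumlt (m : nat) (f : nat -> R) : R :=
  match m with O => 0 | S m' => sumlt m' f + f m' end.

Definition is_poly2 (p : nat) (f : R -> R -> R) : Prop :=
  exists c : nat -> nat -> R, forall x y : R,
    f x y = sumlt (S p) (fun i => sumlt (S p - i) (fun j => c i j * x ^ i * y ^ j)).

(* g : R -> R is a polynomial with at most m coefficients, i.e. degree <= m-1;
   m = 0 gives only the zero polynomial (P_{-1} = {0}). *)
Definition is_poly1 (m : nat) (g : R -> R) : Prop :=
  exists c : nat -> R, forall t : R, g t = sumlt m (fun k => c k * t ^ k).

(* a symmetric-matrix-valued field on R^2: [[s11, s12], [s12, s22]] *)
Record symfield := SymField { s11 : R -> R -> R; s12 : R -> R -> R; s22 : R -> R -> R }.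

Definition is_polySym (p : nat) (s : symfield) : Prop :=
  is_poly2 p (s11 s) /\ is_poly2 p (s12 s) /\ is_poly2 p (s22 s).

Definition pt := (R * R)%type.

Definition det2 (a b c : pt) : R :=
  (fst b - fst a) * (snd c - snd a) - (snd b - snd a) * (fst c - fst a).

Definition dist2 (u v : pt) : R :=
  sqrt ((fst v - fst u) ^ 2 + (snd v - snd u) ^ 2).

Definition seg (u v : pt) (t : R) : pt :=
  (fst u + t * (fst v - fst u), snd u + t * (snd v - snd u)).

(* outward unit normal of the edge [u,v] of the triangle whose third vertex is w *)
Definition onormal (u v w : pt) : pt :=
  let m := ((snd v - snd u) / dist2 u v, - (fst v - fst u) / dist2 u v) in
  if Rlt_dec (fst m * (fst w - fst u) + snd m * (snd w - snd u)) 0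
  then m else (- fst m, - snd m).

Definition sigma_n (s : symfield) (n x : pt) : pt :=
  (s11 s (fst x) (snd x) * fst n + s12 s (fst x) (snd x) * snd n,
   s12 s (fst x) (snd x) * fst n + s22 s (fst x) (snd x) * snd n).

Definition ddot (s t : symfield) (x y : R) : R :=
  s11 s x y * s11 t x y + 2 * (s12 s x y * s12 t x y) + s22 s x y * s22 t x y.

(* line integral over edge [u,v] of a function given in the affine parameter t in [0,1] *)
Definition edge_int (u v : pt) (g : R -> R) : R :=
  dist2 u v * RInt g 0 1.

(* integral over the triangle abc (change of variables from the reference triangle) *)
Definition tri_int (a b c : pt) (f : R -> R -> R) : R :=
  Rabs (det2 a b c) *
  RInt (fun s => RInt (fun t =>
     f (fst a + s * (fst b - fst a) + t * (fst c - fst a))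
       (snd a + s * (snd b - snd a) + t * (snd c - snd a))) 0 (1 - s)) 0 1.

Definition vertex_dof0 (s : symfield) (x : pt) : Prop :=
  s11 s (fst x) (snd x) = 0 /\ s12 s (fst x) (snd x) = 0 /\ s22 s (fst x) (snd x) = 0.

(* DOF (ii) on edge [u,v] (third vertex w): int_gamma (sigma n).r ds = 0 for all r in P_{p-2}(gamma;V) *)
Definition edge_dof0 (p : nat) (s : symfield) (u v w : pt) : Prop :=
  forall r1 r2 : R -> R, is_poly1 (p - 1) r1 -> is_poly1 (p - 1) r2 ->
    edge_int u v (fun t =>
      let sn := sigma_n s (onormal u v w) (seg u v t) in
      fst sn * r1 t + snd sn * r2 t) = 0.

Definition normal_free_on_edge (t : symfield) (u v w : pt) : Prop :=
  forall t0 : R, 0 <= t0 <= 1 -> sigma_n t (onormal u v w) (seg u v t0) = (0, 0).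

Definition in_Sigma0 (p : nat) (a b c : pt) (t : symfield) : Prop :=
  is_polySym p t /\ normal_free_on_edge t a b c /\
  normal_free_on_edge t b c a /\ normal_free_on_edge t c a b.

From Stdlib Require Import Reals Lra Lia.
From Coquelicot Require Import Coquelicot.
Open Scope R_scope.

(* On an edge, each component g of the normal trace sigma n is a polynomial of
   degree <= p in the edge parameter t that vanishes at both ends (vertex
   degrees of freedom), so g = t (t - 1) q with q of degree <= p - 2; testing the
   edge degrees of freedom with r = - q gives the integral of t (1 - t) q^2 = 0,
   hence g = 0.  So sigma itself lies in Sigma^p_0(K; S), and the interior degrees
   of freedom with tau = sigma give the integral of sigma : sigma over K = 0: sigma
   vanishes on K and, being polynomial, everywhere. *)

Lemma sumlt_shift m f : sumlt (S m) f = f 0%nat + sumlt m (fun k => f (S k)).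
Proof. induction m; simpl in *; [lra|]. rewrite IHm. simpl. lra. Qed.

Lemma sumlt_plus m f g : sumlt m (fun k => f k + g k) = sumlt m f + sumlt m g.
Proof. induction m; simpl; [lra|]. rewrite IHm. lra. Qed.

Lemma sumlt_scal m k f : sumlt m (fun i => k * f i) = k * sumlt m f.
Proof. induction m; simpl; [lra|]. rewrite IHm. lra. Qed.

Lemma sumlt_ext m f g : (forall k, (k < m)%nat -> f k = g k) -> sumlt m f = sumlt m g.
Proof.
  induction m; intros H; simpl; [lra|].
  rewrite IHm, H; [reflexivity | lia | intros; apply H; lia].
Qed.

Lemma is_poly1_zero m : is_poly1 m (fun _ => 0).
Proof.
  exists (fun _ => 0). intros t. induction m; simpl; [reflexivity | rewrite <- IHm; ring].
Qed.

(* Polynomials of degree at most [n], described by closure rather than by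
   coefficients, so that products and affine substitutions are immediate. *)
Inductive poly_le : nat -> (R -> R) -> Prop :=
| poly_le_const n c : poly_le n (fun _ => c)
| poly_le_add n f g : poly_le n f -> poly_le n g -> poly_le n (fun t => f t + g t)
| poly_le_mulX n f : poly_le n f -> poly_le (S n) (fun t => t * f t)
| poly_le_S n f : poly_le n f -> poly_le (S n) f
| poly_le_ext n f g : poly_le n f -> (forall t, f t = g t) -> poly_le n g.

Lemma poly_le_scal n k f : poly_le n f -> poly_le n (fun t => k * f t).
Proof.
  induction 1.
  - apply poly_le_const.
  - apply poly_le_ext with (fun t => k * f t + k * g t); [now apply poly_le_add|].
    intros; ring.
  - apply poly_le_ext with (fun t => t * (k * f t)); [now apply poly_le_mulX|].
    intros; ring.
  - now apply poly_le_S.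
  - apply poly_le_ext with (fun t => k * f t); [assumption|].
    intros t; now rewrite H0.
Qed.

Lemma poly_le_weaken n m f : (n <= m)%nat -> poly_le n f -> poly_le m f.
Proof. induction 1; auto using poly_le_S. Qed.

Lemma poly_le_mul m n f g : poly_le m f -> poly_le n g -> poly_le (m + n) (fun t => f t * g t).
Proof.
  intros Hf Hg. induction Hf.
  - apply (poly_le_weaken n); [lia|]. now apply poly_le_scal.
  - apply poly_le_ext with (fun t => f t * g t + g0 t * g t); [now apply poly_le_add|].
    intros; ring.
  - apply poly_le_ext with (fun t => t * (f t * g t)); [now apply poly_le_mulX|].
    intros; ring.
  - now apply poly_le_S.
  - apply poly_le_ext with (fun t => f t * g t); [assumption|].
    intros t; now rewrite H.
Qed.

Lemma poly_le_pow k f : poly_le 1 f -> poly_le k (fun t => f t ^ k).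
Proof.
  intros Hf. induction k; simpl.
  - apply poly_le_const.
  - now apply (poly_le_mul 1 k).
Qed.

Lemma poly_le_sumlt n m (F : nat -> R -> R) :
  (forall k, (k < m)%nat -> poly_le n (F k)) -> poly_le n (fun t => sumlt m (fun k => F k t)).
Proof.
  induction m; intros H; simpl.
  - apply poly_le_const.
  - apply poly_le_add; [apply IHm; intros|]; apply H; lia.
Qed.

Lemma poly_le_affine x0 dx : poly_le 1 (fun t => x0 + t * dx).
Proof. apply poly_le_add; [apply poly_le_const | apply poly_le_mulX, poly_le_const]. Qed.

Lemma poly_le_is_poly1 n f : poly_le n f -> is_poly1 (S n) f.
Proof.
  induction 1.
  - exists (fun k => match k with O => c | _ => 0 end). intros t.
    induction n; simpl in *; [ring | rewrite <- IHn; ring].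
  - destruct IHpoly_le1 as [c1 H1], IHpoly_le2 as [c2 H2].
    exists (fun k => c1 k + c2 k). intros t.
    rewrite H1, H2, <- sumlt_plus. apply sumlt_ext. intros; ring.
  - destruct IHpoly_le as [c Hc].
    exists (fun k => match k with O => 0 | S k' => c k' end). intros t.
    rewrite sumlt_shift, Hc, <- sumlt_scal. cbv beta iota.
    rewrite Rmult_0_l, Rplus_0_l. apply sumlt_ext. intros; simpl; ring.
  - destruct IHpoly_le as [c Hc].
    exists (fun k => if Nat.leb k n then c k else 0). intros t.
    rewrite Hc. change (sumlt (S (S n)) ?F) with (sumlt (S n) F + F (S n)). cbv beta.
    rewrite (proj2 (Nat.leb_gt (S n) n)), Rmult_0_l, Rplus_0_r by lia.
    apply sumlt_ext. intros k Hk. now rewrite (proj2 (Nat.leb_le k n)) by lia.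
  - destruct IHpoly_le as [c Hc]. exists c. intros t. now rewrite <- H0.
Qed.

Lemma poly_le_continuous n f x : poly_le n f -> continuous f x.
Proof.
  induction 1.
  - apply continuous_const.
  - now apply (continuous_plus f g).
  - apply (continuous_mult (fun t => t) f); [apply continuous_id | assumption].
  - assumption.
  - eapply continuous_ext; eauto.
Qed.

Lemma poly_le_0_const f : poly_le 0 f -> forall t u, f t = f u.
Proof. intros Hf t u. destruct (poly_le_is_poly1 _ _ Hf) as [c Hc]. rewrite !Hc. reflexivity. Qed.

Lemma poly_le_factor n g a :
  poly_le n g -> exists h, poly_le (pred n) h /\ forall t, g t - g a = (t - a) * h t.
Proof.
  induction 1.
  - exists (fun _ => 0). split; [apply poly_le_const | intros; ring].
  - destruct IHpoly_le1 as [h1 [P1 E1]], IHpoly_le2 as [h2 [P2 E2]].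
    exists (fun t => h1 t + h2 t). split; [now apply poly_le_add|].
    intros t. rewrite Rmult_plus_distr_l, <- E1, <- E2. ring.
  - destruct IHpoly_le as [h [P E]].
    exists (fun t => f t + a * h t). split.
    + apply poly_le_add; [assumption|].
      apply poly_le_scal, (poly_le_weaken (pred n)); [lia | assumption].
    + intros t. specialize (E t). nra.
  - destruct IHpoly_le as [h [P E]].
    exists h. split; [apply (poly_le_weaken (pred n)); [lia | assumption] | assumption].
  - destruct IHpoly_le as [h [P E]].
    exists h. split; [assumption|]. intros t. now rewrite <- !H0.
Qed.

Lemma poly_le_eq0_on_interval n g lo hi :
  poly_le n g -> lo < hi -> (forall t, lo < t < hi -> g t = 0) -> forall t, g t = 0.
Proof.
  revert g lo hi. induction n; intros g lo hi Hg Hlh Hz t.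
  - rewrite (poly_le_0_const _ Hg t ((lo + hi) / 2)). apply Hz; lra.
  - set (m := (lo + hi) / 2).
    destruct (poly_le_factor _ _ m Hg) as [h [Ph Eh]].
    assert (Hm : g m = 0) by (apply Hz; unfold m; lra).
    assert (Hh : forall t, h t = 0).
    { apply (IHn h m hi Ph); [unfold m; lra|]. intros u Hu.
      specialize (Eh u). rewrite Hz, Hm in Eh by (unfold m in *; lra).
      apply Rmult_eq_reg_l with (u - m); lra. }
    specialize (Eh t). rewrite Hh, Hm in Eh. lra.
Qed.

Lemma locally_interval a b x : a < x < b -> locally x (fun y => a < y < b).
Proof.
  intros Hx. apply (open_and (fun y => a < y) (fun y => y < b));
    [apply open_gt | apply open_lt | exact Hx].
Qed.

(* [RInt f a] vanishes on [[a, b]], so [f], its derivative, vanishes inside. *)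
Lemma RInt_nonneg_eq0 f a b :
  a < b -> (forall x, a <= x <= b -> continuous f x) -> (forall x, a <= x <= b -> 0 <= f x) ->
  RInt f a b = 0 -> forall x, a < x < b -> f x = 0.
Proof.
  intros Hab Hc Hp Hi x Hx.
  assert (Hex : forall u v, a <= u <= v -> v <= b -> ex_RInt f u v).
  { intros u v Huv Hvb. apply (ex_RInt_continuous (V := R_CompleteNormedModule)).
    intros z Hz. rewrite Rmin_left, Rmax_right in Hz by lra. apply Hc; lra. }
  assert (Hprim : forall y, a < y < b -> RInt f a y = 0).
  { intros y Hy.
    assert (H1 : 0 <= RInt f a y)
      by (apply RInt_ge_0; [lra | apply Hex; lra | intros; apply Hp; lra]).
    assert (H2 : 0 <= RInt f y b)
      by (apply RInt_ge_0; [lra | apply Hex; lra | intros; apply Hp; lra]).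
    pose proof (RInt_Chasles f a y b (Hex a y ltac:(lra) ltac:(lra))
                  (Hex y b ltac:(lra) ltac:(lra))) as E.
    change (RInt f a y + RInt f y b = RInt f a b) in E. lra. }
  rewrite <- (Derive_RInt f a x); [| | apply Hc; lra].
  - rewrite <- (Derive_const 0 x). apply Derive_ext_loc.
    apply (filter_imp (fun y => a < y < b)); [exact Hprim | now apply locally_interval].
  - apply (filter_imp (fun y => a < y < b)); [|now apply locally_interval].
    intros y Hy. apply Hex; lra.
Qed.

Lemma poly_le1_eq0_at_01 g : poly_le 1 g -> g 0 = 0 -> g 1 = 0 -> forall t, g t = 0.
Proof.
  intros Hg H0 H1 t.
  destruct (poly_le_factor _ _ 0 Hg) as [h [Ph Eh]].
  pose proof (Eh 1) as E1. pose proof (Eh t) as Et.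
  rewrite H0, H1 in E1. rewrite (poly_le_0_const _ Ph t 1), H0 in Et.
  replace (h 1) with 0 in Et by lra. lra.
Qed.

Lemma poly_le_factor01 n g : poly_le n g -> g 0 = 0 -> g 1 = 0 ->
  exists q, poly_le (pred (pred n)) q /\ forall t, g t = t * (t - 1) * q t.
Proof.
  intros Hg H0 H1.
  destruct (poly_le_factor _ _ 0 Hg) as [h [Ph Eh]].
  assert (Hh1 : h 1 = 0) by (specialize (Eh 1); rewrite H0, H1 in Eh; lra).
  destruct (poly_le_factor _ _ 1 Ph) as [q [Pq Eq]].
  exists q. split; [assumption|]. intros t.
  specialize (Eh t). specialize (Eq t). rewrite H0, Hh1 in *. nra.
Qed.

Lemma poly_le_vanishing_ends_orthogonal_eq0 n g : (1 <= n)%nat -> poly_le n g -> g 0 = 0 -> g 1 = 0 ->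
  (forall r, is_poly1 (n - 1) r -> RInt (fun t => g t * r t) 0 1 = 0) -> forall t, g t = 0.
Proof.
  intros Hn Hg H0 H1 Horth.
  destruct (Nat.eq_dec n 1) as [->|Hn2]; [now apply poly_le1_eq0_at_01|].
  destruct (poly_le_factor01 _ _ Hg H0 H1) as [q [Pq Eq]].
  set (G := fun t => t * (1 - t) * (q t * q t)).
  assert (PG : poly_le (1 + 1 + (pred (pred n) + pred (pred n))) G).
  { apply poly_le_mul; [apply poly_le_mul|apply poly_le_mul; assumption].
    - apply poly_le_ext with (fun t => 0 + t * 1); [apply poly_le_affine | intros; ring].
    - apply poly_le_ext with (fun t => 1 + t * (-1)); [apply poly_le_affine | intros; ring]. }
  assert (HG : RInt G 0 1 = 0).
  { transitivity (RInt (fun t => g t * (-1 * q t)) 0 1).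
    - apply RInt_ext. intros t _. unfold G. rewrite Eq. simpl. ring.
    - apply Horth. replace (n - 1)%nat with (S (pred (pred n))) by lia.
      now apply poly_le_is_poly1, poly_le_scal. }
  assert (Hq : forall t, 0 < t < 1 -> q t = 0).
  { intros t Ht.
    assert (Gt : G t = 0).
    { apply (RInt_nonneg_eq0 G 0 1); try lra.
      - intros; eapply poly_le_continuous; eauto.
      - intros x Hx. unfold G. apply Rmult_le_pos; [nra | apply Rle_0_sqr]. }
    unfold G in Gt. apply Rmult_integral in Gt as [Gt|Gt]; [nra|].
    now apply Rmult_integral in Gt as [|]. }
  intros t. rewrite Eq, (poly_le_eq0_on_interval _ _ 0 1 Pq) by (lra || assumption). ring.
Qed.

Lemma poly2_line p f x0 y0 dx dy :
  is_poly2 p f -> poly_le p (fun t => f (x0 + t * dx) (y0 + t * dy)).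
Proof.
  intros [c Hc]. eapply poly_le_ext; [| intros t; symmetry; apply Hc].
  apply poly_le_sumlt. intros i Hi. apply poly_le_sumlt. intros j Hj.
  apply (poly_le_weaken (0 + i + j)); [lia|].
  apply poly_le_mul; [apply poly_le_mul; [apply poly_le_const|]|];
    apply (poly_le_pow _ (fun t => _ + t * _)), poly_le_affine.
Qed.

Lemma det2_cycle a b c : det2 b c a = det2 a b c.
Proof. unfold det2. ring. Qed.

Lemma dist2_neq0 a b c : det2 a b c <> 0 -> dist2 a b <> 0.
Proof.
  intros Hd E. apply Hd. unfold dist2 in E.
  pose proof (pow2_ge_0 (fst b - fst a)). pose proof (pow2_ge_0 (snd b - snd a)).
  apply sqrt_eq_0 in E; [|lra].
  assert (Hx : fst b - fst a = 0) by nra. assert (Hy : snd b - snd a = 0) by nra.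
  unfold det2. rewrite Hx, Hy. ring.
Qed.

Lemma seg_0 u v : seg u v 0 = (fst u, snd u).
Proof. unfold seg. f_equal; ring. Qed.

Lemma seg_1 u v : seg u v 1 = (fst v, snd v).
Proof. unfold seg. f_equal; ring. Qed.

Lemma sigma_n_vertex s n x : vertex_dof0 s x -> sigma_n s n x = (0, 0).
Proof. intros [H1 [H2 H3]]. unfold sigma_n. rewrite H1, H2, H3. f_equal; ring. Qed.

Lemma sigma_n_seg_poly p s n u v : is_polySym p s ->
  poly_le p (fun t => fst (sigma_n s n (seg u v t))) /\
  poly_le p (fun t => snd (sigma_n s n (seg u v t))).
Proof.
  intros [H11 [H12 H22]].
  assert (L : forall f k, is_poly2 p f ->
            poly_le p (fun t => f (fst (seg u v t)) (snd (seg u v t)) * k)).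
  { intros f k Hf. apply poly_le_ext with (fun t => k * f (fst (seg u v t)) (snd (seg u v t))).
    - apply poly_le_scal, poly2_line, Hf.
    - intros; apply Rmult_comm. }
  unfold sigma_n; cbn [fst snd]. split; apply poly_le_add; apply L; assumption.
Qed.

Lemma edge_dof0_orthogonal p s u v w : dist2 u v <> 0 -> edge_dof0 p s u v w ->
  forall r, is_poly1 (p - 1) r ->
    RInt (fun t => fst (sigma_n s (onormal u v w) (seg u v t)) * r t) 0 1 = 0 /\
    RInt (fun t => snd (sigma_n s (onormal u v w) (seg u v t)) * r t) 0 1 = 0.
Proof.
  intros Hd He r Hr.
  pose proof (He r _ Hr (is_poly1_zero _)) as E1.
  pose proof (He _ r (is_poly1_zero _) Hr) as E2.
  unfold edge_int in E1, E2.
  apply Rmult_integral in E1, E2.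
  destruct E1 as [|E1]; [contradiction|]. destruct E2 as [|E2]; [contradiction|].
  split; [etransitivity; [|exact E1] | etransitivity; [|exact E2]];
    apply RInt_ext; intros; simpl; ring.
Qed.

Lemma edge_dof0_normal_free p s u v w : (1 <= p)%nat -> is_polySym p s -> dist2 u v <> 0 ->
  vertex_dof0 s u -> vertex_dof0 s v -> edge_dof0 p s u v w -> normal_free_on_edge s u v w.
Proof.
  intros Hp Hs Hd Vu Vv He t0 _.
  set (n := onormal u v w).
  destruct (sigma_n_seg_poly p s n u v Hs) as [P1 P2].
  assert (Z0 : sigma_n s n (seg u v 0) = (0, 0)) by (rewrite seg_0; now apply sigma_n_vertex).
  assert (Z1 : sigma_n s n (seg u v 1) = (0, 0)) by (rewrite seg_1; now apply sigma_n_vertex).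
  pose proof (edge_dof0_orthogonal p s u v w Hd He) as Horth.
  apply injective_projections; simpl.
  - apply (poly_le_vanishing_ends_orthogonal_eq0 p _ Hp P1);
      [now rewrite Z0 | now rewrite Z1 | intros r Hr; apply (proj1 (Horth r Hr))].
  - apply (poly_le_vanishing_ends_orthogonal_eq0 p _ Hp P2);
      [now rewrite Z0 | now rewrite Z1 | intros r Hr; apply (proj2 (Horth r Hr))].
Qed.

Inductive bipoly : (R -> R -> R) -> Prop :=
| bipoly_const c : bipoly (fun _ _ => c)
| bipoly_add f g : bipoly f -> bipoly g -> bipoly (fun s t => f s t + g s t)
| bipoly_mulS f : bipoly f -> bipoly (fun s t => s * f s t)
| bipoly_mulT f : bipoly f -> bipoly (fun s t => t * f s t)
| bipoly_ext f g : bipoly f -> (forall s t, f s t = g s t) -> bipoly g.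

Lemma bipoly_scal k f : bipoly f -> bipoly (fun s t => k * f s t).
Proof.
  induction 1.
  - apply bipoly_const.
  - apply bipoly_ext with (fun s t => k * f s t + k * g s t); [now apply bipoly_add | intros; ring].
  - apply bipoly_ext with (fun s t => s * (k * f s t)); [now apply bipoly_mulS | intros; ring].
  - apply bipoly_ext with (fun s t => t * (k * f s t)); [now apply bipoly_mulT | intros; ring].
  - apply bipoly_ext with (fun s t => k * f s t); [assumption | intros; now rewrite H0].
Qed.

Lemma bipoly_mul f g : bipoly f -> bipoly g -> bipoly (fun s t => f s t * g s t).
Proof.
  intros Hf Hg. induction Hf.
  - now apply bipoly_scal.
  - apply bipoly_ext with (fun s t => f s t * g s t + g0 s t * g s t);
      [now apply bipoly_add | intros; ring].
  - apply bipoly_ext with (fun s t => s * (f s t * g s t)); [now apply bipoly_mulS | intros; ring].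
  - apply bipoly_ext with (fun s t => t * (f s t * g s t)); [now apply bipoly_mulT | intros; ring].
  - apply bipoly_ext with (fun s t => f s t * g s t); [assumption | intros; now rewrite H].
Qed.

Lemma bipoly_pow k f : bipoly f -> bipoly (fun s t => f s t ^ k).
Proof. intros Hf. induction k; simpl; [apply bipoly_const | now apply bipoly_mul]. Qed.

Lemma bipoly_sumlt m (F : nat -> R -> R -> R) :
  (forall k, (k < m)%nat -> bipoly (F k)) -> bipoly (fun s t => sumlt m (fun k => F k s t)).
Proof.
  induction m; intros H; simpl.
  - apply bipoly_const.
  - apply bipoly_add; [apply IHm; intros|]; apply H; lia.
Qed.

Lemma bipoly_affine x0 d1 d2 : bipoly (fun s t => x0 + s * d1 + t * d2).
Proof.
  apply bipoly_add; [apply bipoly_add|]; auto using bipoly_const, bipoly_mulS, bipoly_mulT.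
Qed.

Lemma poly2_affine_bipoly p f x0 y0 d1 d2 e1 e2 : is_poly2 p f ->
  bipoly (fun s t => f (x0 + s * d1 + t * d2) (y0 + s * e1 + t * e2)).
Proof.
  intros [c Hc]. eapply bipoly_ext; [| intros s t; symmetry; apply Hc].
  apply bipoly_sumlt. intros i _. apply bipoly_sumlt. intros j _.
  apply bipoly_mul; [apply bipoly_mul; [apply bipoly_const|]|];
    apply (bipoly_pow _ (fun s t => _ + s * _ + t * _)), bipoly_affine.
Qed.

Lemma bipoly_continuous_t f s t : bipoly f -> continuous (f s) t.
Proof.
  induction 1.
  - apply continuous_const.
  - now apply (continuous_plus (f s) (g s)).
  - apply (continuous_mult (fun _ => s) (f s)); [apply continuous_const | assumption].
  - apply (continuous_mult (fun t => t) (f s)); [apply continuous_id | assumption].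
  - eapply continuous_ext; eauto.
Qed.

Lemma bipoly_ex_RInt_t f s a b : bipoly f -> ex_RInt (f s) a b.
Proof.
  intros Hf. apply (ex_RInt_continuous (V := R_CompleteNormedModule)).
  intros; now apply bipoly_continuous_t.
Qed.

Lemma bipoly_weight k f : bipoly f -> bipoly (fun s t => t ^ k * f s t).
Proof.
  intros Hf. induction k.
  - apply bipoly_ext with f; [assumption | intros; simpl; ring].
  - apply bipoly_ext with (fun s t => t * (t ^ k * f s t));
      [now apply bipoly_mulT | intros; simpl; ring].
Qed.

Lemma bipoly_weight_ex_RInt k f s a b : bipoly f -> ex_RInt (fun t => t ^ k * f s t) a b.
Proof. intros Hf. apply (bipoly_ex_RInt_t (fun s t => t ^ k * f s t)), bipoly_weight, Hf. Qed.

Lemma RInt_plus_R (f g : R -> R) a b : ex_RInt f a b -> ex_RInt g a b ->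
  RInt (fun x => f x + g x) a b = RInt f a b + RInt g a b.
Proof. exact (RInt_plus (V := R_CompleteNormedModule) f g a b). Qed.

Lemma RInt_scal_R (f : R -> R) a b k : ex_RInt f a b ->
  RInt (fun x => k * f x) a b = k * RInt f a b.
Proof. exact (RInt_scal (V := R_CompleteNormedModule) f a b k). Qed.

Lemma RInt_monomial k c x : RInt (fun t => t ^ k * c) 0 x = c * (x ^ S k / INR (S k)).
Proof.
  apply is_RInt_unique.
  apply (is_RInt_ext (fun t => scal c (t ^ k))); [intros; apply Rmult_comm|].
  replace (c * (x ^ S k / INR (S k))) with (scal c (x ^ S k / INR (S k) - 0 ^ S k / INR (S k))).
  - apply (is_RInt_scal (V := R_NormedModule)), is_RInt_pow.
  - rewrite pow_i by lia. unfold scal; simpl; unfold mult; simpl.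
    field. apply (not_0_INR (S k)). lia.
Qed.

(* The weight [t ^ k] is what makes the induction go through the [bipoly_mulT] case. *)
Lemma bipoly_section_RInt_continuous f s0 : bipoly f ->
  continuous (fun s => RInt (f s) 0 (1 - s)) s0.
Proof.
  intros Hf.
  enough (H : forall k, continuous (fun s => RInt (fun t => t ^ k * f s t) 0 (1 - s)) s0).
  { eapply continuous_ext; [|apply (H 0%nat)]. intros s. apply RInt_ext. intros; simpl; ring. }
  induction Hf; intros k.
  - eapply continuous_ext; [intros s; symmetry; apply RInt_monomial|].
    apply (ex_derive_continuous (V := R_NormedModule)). auto_derive. auto.
  - apply continuous_ext with
      (fun s => RInt (fun t => t ^ k * f s t) 0 (1 - s) + RInt (fun t => t ^ k * g s t) 0 (1 - s)).
    + intros s. rewrite <- RInt_plus_R by now apply bipoly_weight_ex_RInt.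
      apply RInt_ext. intros; simpl; ring.
    + now apply (continuous_plus (fun s => RInt (fun t => t ^ k * f s t) 0 (1 - s))).
  - apply continuous_ext with (fun s => s * RInt (fun t => t ^ k * f s t) 0 (1 - s)).
    + intros s. rewrite <- RInt_scal_R by now apply bipoly_weight_ex_RInt.
      apply RInt_ext. intros; simpl; ring.
    + apply (continuous_mult (fun s => s) (fun s => RInt (fun t => t ^ k * f s t) 0 (1 - s)));
        [apply continuous_id | apply IHHf].
  - apply continuous_ext with (fun s => RInt (fun t => t ^ S k * f s t) 0 (1 - s)); [|apply IHHf].
    intros s. apply RInt_ext. intros; simpl; ring.
  - apply continuous_ext with (fun s => RInt (fun t => t ^ k * f s t) 0 (1 - s)); [|apply IHHf].
    intros s. apply RInt_ext. intros. now rewrite H.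
Qed.

Definition tri_pullback (a b c : pt) (f : R -> R -> R) (s t : R) : R :=
  f (fst a + s * (fst b - fst a) + t * (fst c - fst a))
    (snd a + s * (snd b - snd a) + t * (snd c - snd a)).

Lemma tri_pullback_onto a b c f x y : det2 a b c <> 0 ->
  exists s t, tri_pullback a b c f s t = f x y.
Proof.
  intros Hd.
  exists (((x - fst a) * (snd c - snd a) - (y - snd a) * (fst c - fst a)) / det2 a b c),
         (((fst b - fst a) * (y - snd a) - (snd b - snd a) * (x - fst a)) / det2 a b c).
  unfold tri_pullback, det2 in *. f_equal; field; exact Hd.
Qed.

Lemma poly2_eq0_on_triangle p f a b c : det2 a b c <> 0 -> is_poly2 p f ->
  (forall s t, 0 < s < 1 -> 0 < t < 1 - s -> tri_pullback a b c f s t = 0) ->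
  forall x y, f x y = 0.
Proof.
  intros Hd Hf Hz.
  assert (Hs : forall s t, 0 < s < 1 -> tri_pullback a b c f s t = 0).
  { intros s t Hs. apply (poly_le_eq0_on_interval p (tri_pullback a b c f s) 0 (1 - s)).
    - apply poly2_line, Hf.
    - lra.
    - intros; apply Hz; lra. }
  assert (Hst : forall s t, tri_pullback a b c f s t = 0).
  { intros s t. apply (poly_le_eq0_on_interval p (fun s => tri_pullback a b c f s t) 0 1).
    - eapply poly_le_ext;
        [apply (poly2_line p f (fst a + t * (fst c - fst a)) (snd a + t * (snd c - snd a))
                  (fst b - fst a) (snd b - snd a)), Hf|].
      intros u. unfold tri_pullback. apply (f_equal2 f); ring.
    - lra.
    - intros u Hu. now apply Hs. }
  intros x y. destruct (tri_pullback_onto a b c f x y Hd) as [s [t <-]]. apply Hst.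
Qed.

Lemma bipoly_nonneg_triangle_RInt_eq0 F : bipoly F -> (forall s t, 0 <= F s t) ->
  RInt (fun s => RInt (F s) 0 (1 - s)) 0 1 = 0 ->
  forall s t, 0 < s < 1 -> 0 < t < 1 - s -> F s t = 0.
Proof.
  intros HF Hpos Hint.
  assert (Hsection : forall s, 0 < s < 1 -> RInt (F s) 0 (1 - s) = 0).
  { apply RInt_nonneg_eq0; [lra | intros; now apply bipoly_section_RInt_continuous | | exact Hint].
    intros s Hs. apply RInt_ge_0; [lra | now apply bipoly_ex_RInt_t | auto]. }
  intros s t Hs Ht.
  apply (RInt_nonneg_eq0 (F s) 0 (1 - s));
    [lra | intros; now apply bipoly_continuous_t | auto | | lra].
  now apply Hsection.
Qed.

Lemma tri_int_ddot_self_eq0 p a b c s : det2 a b c <> 0 -> is_polySym p s ->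
  tri_int a b c (ddot s s) = 0 -> forall x y, s11 s x y = 0 /\ s12 s x y = 0 /\ s22 s x y = 0.
Proof.
  intros Hd [H11 [H12 H22]] Hint.
  apply Rmult_integral in Hint as [Habs|Hint]; [now apply Rabs_no_R0 in Hd|].
  assert (Hbi : forall f, is_poly2 p f -> bipoly (tri_pullback a b c f)) by
    (intros; apply poly2_affine_bipoly with p; assumption).
  assert (HF : bipoly (tri_pullback a b c (ddot s s))).
  { unfold tri_pullback, ddot.
    apply bipoly_add; [apply bipoly_add|]; [| apply bipoly_scal |];
      apply bipoly_mul; apply Hbi; assumption. }
  assert (Hzero : forall s0 t0, 0 < s0 < 1 -> 0 < t0 < 1 - s0 ->
            tri_pullback a b c (ddot s s) s0 t0 = 0).
  { apply bipoly_nonneg_triangle_RInt_eq0; [exact HF | | exact Hint].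
    intros; unfold tri_pullback, ddot. nra. }
  intros x y.
  split; [|split]; (apply (poly2_eq0_on_triangle p _ a b c Hd); [assumption|]);
    intros s0 t0 Hs Ht; specialize (Hzero s0 t0 Hs Ht); unfold tri_pullback, ddot in *; nra.
Qed.

Theorem lemma3p2 (a b c : pt) (p : nat) (s : symfield) :
  det2 a b c <> 0 ->
  (1 <= p)%nat ->
  is_polySym p s ->
  vertex_dof0 s a -> vertex_dof0 s b -> vertex_dof0 s c ->
  edge_dof0 p s a b c -> edge_dof0 p s b c a -> edge_dof0 p s c a b ->
  (forall t : symfield, in_Sigma0 p a b c t -> tri_int a b c (ddot s t) = 0) ->
  forall x y : R, s11 s x y = 0 /\ s12 s x y = 0 /\ s22 s x y = 0.
Proof.
  intros Hd Hp Hs Va Vb Vc Eab Ebc Eca Hint.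
  assert (Hdab : dist2 a b <> 0) by now apply (dist2_neq0 a b c).
  assert (Hdbc : dist2 b c <> 0) by (apply (dist2_neq0 b c a); now rewrite det2_cycle).
  assert (Hdca : dist2 c a <> 0) by (apply (dist2_neq0 c a b); now rewrite <- det2_cycle).
  assert (HSigma0 : in_Sigma0 p a b c s).
  { split; [exact Hs | split; [|split]].
    - exact (edge_dof0_normal_free p s a b c Hp Hs Hdab Va Vb Eab).
    - exact (edge_dof0_normal_free p s b c a Hp Hs Hdbc Vb Vc Ebc).
    - exact (edge_dof0_normal_free p s c a b Hp Hs Hdca Vc Va Eca). }
  exact (tri_int_ddot_self_eq0 p a b c s Hd Hs (Hint s HSigma0)).
Qed.
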